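(* Let $V,c_1,c_2,K,V',c'_\lambda$ be as follows: $V$ is a finite-dimensional complex vector space; $c_1,c_2\in\wedge^2V$ with $c_\lambda=\lambda_1c_1+\lambda_2c_2$ nondegenerate for generic $\lambda$; $K\subset V$ is a subspace; and the images $c'_i$ of $c_i$ in $\wedge^2(V/K)$ are linearly independent, with $c'_\lambda=\lambda_1c_1'+\lambda_2c_2'$. Let $\Lambda_1=\mathbb C\hat\lambda_1,\dots,\Lambda_s=\mathbb C\hat\lambda_s$ be the complex lines in $\mathbb C^2$ on which $c_\lambda$ is degenerate, and let $\Lambda=\bigcup_i\Lambda_i$. Assume $K^\perp\cap\ker c^\sharp_{\hat\lambda_i}=\{0\}$ for $i=1,\dots,s$. Set $k_\lambda=\dim\bigl(K\cap c_\lambda^\sharp(K^\perp)\bigr)$. Then $k_\lambda=\operatorname{codim}P_{c'_\lambda}$ in $V/K$ for every $\lambda\ne0$, where $P_{c'_\lambda}=\operatorname{im}(c'_\lambda)^\sharp$. Consequently, $\operatorname{rank}c'_\lambda=\max_\mu\operatorname{rank}c'_\mu$ for all $\lambda\in\mathbb C^2\setminus\{0\}$ if and only if: (i) $k_\lambda=k$ is constant on $\mathbb C^2\setminus\Lambda$; and (ii) $k_{\hat\lambda_1}=\dots=k_{\hat\lambda_s}=k$.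
   Context: $K^\perp\subset V^*$ denotes the annihilator of $K$. $b^\sharp:V^*\to V$ is contraction in the first argument, and $\ker b^\sharp$ is its kernel. *)

From HB Require Import structures.
From mathcomp Require Import all_boot all_algebra complex.
From mathcomp Require Import reals.
Set Implicit Arguments.
Unset Strict Implicit.
Unset Printing Implicit Defensive.
Import GRing.Theory.
Local Open Scope ring_scope.

(* Conventions (V = F^n as row vectors, V^* = F^n as row vectors with the
   standard pairing <alpha, v> = alpha *m v^T):
   - a bivector c in /\^2 V is its coefficient matrix C (c = sum C_ij e_i (x) e_j),
     a skew-symmetric n x n matrix;
   - c^# : V^* -> V, contraction in the first argument, is alpha |-> alpha *m C,
     so ker c^# = kermx C and im c^# = row space of C;
   - a subspace K of V is the row space of a matrix K : 'M_(m, n);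
   - K^perp (annihilator in V^* ) is the row space of kermx K^T. *)

Section Defs.
Variable F : fieldType.

Definition skew_mx n (C : 'M[F]_n) : Prop := C^T = - C.

Definition pencil n (C1 C2 : 'M[F]_n) (l : F * F) : 'M[F]_n :=
  l.1 *: C1 + l.2 *: C2.

Definition nondeg_biv n (C : 'M[F]_n) : Prop := \rank C = n.

Definition annih m n (K : 'M[F]_(m, n)) : 'M[F]_n := kermx K^T.

Definition qdim m n (K : 'M[F]_(m, n)) : nat := \rank (annih K).

(* The quotient map pi : V -> V/K ~= F^(qdim K), v |-> v *m qmap K;
   its kernel is exactly K and it is surjective. *)
Definition qmap m n (K : 'M[F]_(m, n)) : 'M[F]_(n, qdim K) :=
  (row_base (annih K))^T.

(* image c' of c in /\^2 (V/K) (i.e. (/\^2 pi) c), in coordinates of V/K *)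
Definition qbiv m n (K : 'M[F]_(m, n)) (C : 'M[F]_n) : 'M[F]_(qdim K) :=
  (qmap K)^T *m C *m qmap K.

Definition qpencil m n (K : 'M[F]_(m, n)) (C1 C2 : 'M[F]_n) (l : F * F)
  : 'M[F]_(qdim K) :=
  l.1 *: qbiv K C1 + l.2 *: qbiv K C2.

Definition kdim m n (K : 'M[F]_(m, n)) (C1 C2 : 'M[F]_n) (l : F * F) : nat :=
  \rank (K :&: (annih K *m pencil C1 C2 l))%MS.

Definition codimP m n (K : 'M[F]_(m, n)) (C1 C2 : 'M[F]_n) (l : F * F) : nat :=
  (qdim K - \rank (qpencil K C1 C2 l))%N.

Definition onLine (h l : F * F) : Prop := exists t : F, l = (t * h.1, t * h.2).

End Defs.

From HB Require Import structures.
From mathcomp Require Import all_boot all_algebra complex.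
From mathcomp Require Import reals.
From mathcomp Require Import zify.
Set Implicit Arguments.
Unset Strict Implicit.
Unset Printing Implicit Defensive.
Import GRing.Theory.
Local Open Scope ring_scope.

(* Write c_lambda = C and let B be a basis of K^perp. Because K^perp meets
   ker C trivially, B C is injective, so C(K^perp) has dimension dim V/K.
   The matrix of c'_lambda is B C pi, with pi : V -> V/K the quotient map of
   kernel K, so rank c'_lambda = dim C(K^perp) - dim (C(K^perp) cap K)
   = dim V/K - k_lambda. This gives k_lambda = codim P_{c'_lambda} whenever
   lambda is off the degeneracy lines, where ker C = 0, and on them by
   hypothesis. The rank of c'_lambda is thus maximal everywhere exactly when
   k_lambda is constant on C^2 \ 0, and k_lambda is constant along each line
   through the origin. *)

Section LinearAlgebra.
Variable F : fieldType.

Lemma mxrank_cap_mul_ker m n p (A : 'M[F]_(m, n)) (P : 'M_n) (Q : 'M_(n, p)) :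
  (A :&: kermx P)%MS = 0 ->
  \rank (A *m P :&: kermx Q)%MS = (\rank A - \rank (A *m P *m Q))%N.
Proof.
move=> AkerP0.
have rAP := mxrank_mul_ker A P; have rAPQ := mxrank_mul_ker (A *m P) Q.
rewrite AkerP0 mxrank0 addn0 in rAP.
by rewrite -rAP -rAPQ addKn.
Qed.

Lemma kermx_qmap m n (K : 'M[F]_(m, n)) : (kermx (qmap K) :=: K)%MS.
Proof.
apply: eqmx_sym; apply/eqmxP.
have sKker : (K <= kermx (qmap K))%MS.
  apply/sub_kermxP; apply: trmx_inj; rewrite trmx_mul trmxK trmx0.
  by apply/sub_kermxP; rewrite eq_row_base.
have [_ <-] := mxrank_leqif_sup sKker.
rewrite sKker mxrank_ker /qmap mxrank_tr eq_row_base mxrank_ker mxrank_tr.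
by have := rank_leq_col K; lia.
Qed.

Lemma rank_cap_annih_mul m n (K : 'M[F]_(m, n)) (P : 'M_n) :
  (annih K :&: kermx P)%MS = 0 ->
  \rank (K :&: annih K *m P)%MS =
    (qdim K - \rank ((qmap K)^T *m P *m qmap K))%N.
Proof.
move=> annih_kerP0.
rewrite capmxC -(cap_eqmx (eqmx_refl _) (kermx_qmap K)).
rewrite mxrank_cap_mul_ker // /qdim /qmap trmxK.
by rewrite (eqmxMr _ (eqmxMr _ (eq_row_base (annih K)))).
Qed.

End LinearAlgebra.

Section Pencil.
Variables (F : fieldType) (m n : nat) (C1 C2 : 'M[F]_n) (K : 'M[F]_(m, n)).

Lemma pencil0 : pencil C1 C2 (0, 0) = 0.
Proof. by rewrite /pencil !scale0r addr0. Qed.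

Lemma pencilZ t (h : F * F) :
  pencil C1 C2 (t * h.1, t * h.2) = t *: pencil C1 C2 h.
Proof. by rewrite /pencil /= scalerDr !scalerA. Qed.

Lemma qpencilE l : qpencil K C1 C2 l = (qmap K)^T *m pencil C1 C2 l *m qmap K.
Proof.
by rewrite /qpencil /pencil /qbiv mulmxDr mulmxDl -!scalemxAr -!scalemxAl.
Qed.

Lemma qpencil0 : qpencil K C1 C2 (0, 0) = 0.
Proof. by rewrite qpencilE pencil0 mulmx0 mul0mx. Qed.

Lemma kdimZ t (h : F * F) : t != 0 ->
  kdim K C1 C2 (t * h.1, t * h.2) = kdim K C1 C2 h.
Proof.
move=> t_neq0; rewrite /kdim pencilZ -scalemxAr.
by rewrite (cap_eqmx (eqmx_refl K) (eqmx_scale _ t_neq0)).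
Qed.

Lemma onLine_scale_neq0 (h l : F * F) t :
  l != (0, 0) -> l = (t * h.1, t * h.2) -> t != 0.
Proof. by move=> l_neq0 le; apply: contra_neq l_neq0 => t0; rewrite le t0 !mul0r. Qed.

Lemma qdim_gt0 :
  (forall a b, a *: qbiv K C1 + b *: qbiv K C2 = 0 -> a = 0 /\ b = 0) ->
  (0 < qdim K)%N.
Proof.
move=> indep; rewrite lt0n; apply/negP => /eqP qdim0.
have all0 (M : 'M[F]_(qdim K)) : M = 0.
  by apply/matrixP => i; move: (ltn_ord i); rewrite [X in (_ < X)%N]qdim0.
by have [/eqP] := indep 1 0 (all0 _); rewrite oner_eq0.
Qed.

End Pencil.

Section DegeneracyLines.
Variables (F : fieldType) (m n s : nat) (C1 C2 : 'M[F]_n) (K : 'M[F]_(m, n)).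
Variable hl : 'I_s -> F * F.
Hypothesis hl_neq0 : forall j, hl j != (0, 0).
Hypothesis degenerate_onLine :
  forall l, ~ nondeg_biv (pencil C1 C2 l) <-> exists j, onLine (hl j) l.
Hypothesis annih_cap_ker_hl :
  forall j, \rank (annih K :&: kermx (pencil C1 C2 (hl j)))%MS = 0%N.

Local Notation c := (pencil C1 C2).
Local Notation k := (kdim K C1 C2).

Lemma nondeg_or_onLine l : nondeg_biv (c l) \/ exists j, onLine (hl j) l.
Proof.
have [nd | deg] := eqVneq (\rank (c l)) n; first by left.
by right; apply/degenerate_onLine => /eqP; rewrite (negbTE deg).
Qed.

Lemma annih_cap_ker_pencil l : l != (0, 0) -> (annih K :&: kermx (c l))%MS = 0.
Proof.
move=> l_neq0; have [nd | [j [t le]]] := nondeg_or_onLine l.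
  have ker0 : kermx (c l) = 0.
    by apply/eqP; rewrite -mxrank_eq0 mxrank_ker nd subnn.
  by rewrite ker0 capmx0.
have t_neq0 := onLine_scale_neq0 l_neq0 le.
apply/eqP; rewrite -mxrank_eq0 -leqn0 -(annih_cap_ker_hl j) le pencilZ.
apply/mxrankS/capmxS => //; apply/sub_kermxP.
have /sub_kermxP := submx_refl (kermx (t *: c (hl j))).
by rewrite -scalemxAr => /eqP; rewrite scaler_eq0 (negbTE t_neq0) => /eqP.
Qed.

Lemma kdim_codimP l : l != (0, 0) -> k l = codimP K C1 C2 l.
Proof.
move=> l_neq0; rewrite /codimP qpencilE.
exact/rank_cap_annih_mul/annih_cap_ker_pencil.
Qed.

Lemma rank_qpencil_max_iff :
  (forall l, l != (0, 0) ->
     forall mu, (\rank (qpencil K C1 C2 mu) <= \rank (qpencil K C1 C2 l))%N)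
  <-> (forall l mu, l != (0, 0) -> mu != (0, 0) -> k l = k mu).
Proof.
have rank_le l : (\rank (qpencil K C1 C2 l) <= qdim K)%N by apply: rank_leq_col.
split=> [max_rank l mu l_neq0 mu_neq0 | kconst l l_neq0 mu].
  rewrite !kdim_codimP // /codimP.
  by have := max_rank l l_neq0 mu; have := max_rank mu mu_neq0 l; lia.
have [-> | mu_neq0] := eqVneq mu (0, 0); first by rewrite qpencil0 mxrank0.
have := kconst l mu l_neq0 mu_neq0; rewrite !kdim_codimP // /codimP.
by have := rank_le l; have := rank_le mu; lia.
Qed.

Lemma off_lines_neq0 l : (0 < n)%N -> ~ (exists j, onLine (hl j) l) -> l != (0, 0).
Proof.
move=> n_gt0 off_lines; apply/eqP => l0; apply/off_lines/degenerate_onLine.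
by rewrite l0 /nondeg_biv pencil0 mxrank0; lia.
Qed.

Lemma kdim_const_iff : (0 < n)%N ->
  (forall l mu, l != (0, 0) -> mu != (0, 0) -> k l = k mu) <->
  exists k0, (forall l, ~ (exists j, onLine (hl j) l) -> k l = k0) /\
             (forall j, k (hl j) = k0).
Proof.
move=> n_gt0; split=> [kconst | [k0 [k_off k_lines]] l mu l_neq0 mu_neq0].
  have e1_neq0 : ((1, 0) : F * F) != (0, 0) by rewrite xpair_eqE oner_eq0.
  exists (k (1, 0)); split=> [l off_lines | j]; apply: kconst => //.
  exact: off_lines_neq0.
suff k_eq l' : l' != (0, 0) -> k l' = k0 by rewrite !k_eq.
move=> l'_neq0; have [nd | [j [t le]]] := nondeg_or_onLine l'.
  by apply: k_off; rewrite -degenerate_onLine.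
by rewrite le kdimZ ?(onLine_scale_neq0 l'_neq0 le).
Qed.

End DegeneracyLines.

Theorem mainTheorem6 (R : realType) (n m : nat) (C1 C2 : 'M[R[i]]_n)
  (K : 'M[R[i]]_(m, n)) (s : nat) (hl : 'I_s -> R[i] * R[i]) :
  skew_mx C1 -> skew_mx C2 ->
  (exists l : R[i] * R[i], nondeg_biv (pencil C1 C2 l)) ->
  (forall a b : R[i], a *: qbiv K C1 + b *: qbiv K C2 = 0 -> a = 0 /\ b = 0) ->
  (forall j, hl j != (0, 0)) ->
  (forall j j', j != j' -> ~ onLine (hl j) (hl j')) ->
  (forall l, ~ nondeg_biv (pencil C1 C2 l) <-> exists j, onLine (hl j) l) ->
  (forall j, \rank (annih K :&: kermx (pencil C1 C2 (hl j)))%MS = 0%N) ->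
  (forall l : R[i] * R[i], l != (0, 0) -> kdim K C1 C2 l = codimP K C1 C2 l)
  /\
  ((forall l : R[i] * R[i], l != (0, 0) ->
      forall mu : R[i] * R[i],
        (\rank (qpencil K C1 C2 mu) <= \rank (qpencil K C1 C2 l))%N)
   <->
   exists k : nat,
     (forall l, ~ (exists j, onLine (hl j) l) -> kdim K C1 C2 l = k) /\
     (forall j, kdim K C1 C2 (hl j) = k)).
Proof.
move=> _ _ _ indep hl_neq0 _ degenerate_onLine annih_cap_ker_hl.
have n_gt0 : (0 < n)%N.
  exact: leq_trans (qdim_gt0 indep) (rank_leq_col _).
split; first exact: kdim_codimP degenerate_onLine annih_cap_ker_hl.
exact: iff_trans (rank_qpencil_max_iff degenerate_onLine annih_cap_ker_hl)
  (kdim_const_iff K hl_neq0 degenerate_onLine n_gt0).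
Qed.
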